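(* Let $\alpha,\beta,\gamma\in\mathbb{R}$ with $\gamma\neq 0$, and let $G_2$ be the connected, simply connected Lie group whose Lie algebra $\mathfrak{g}_2$ has a basis $\{e_1,e_2,e_3\}$ with $[e_1,e_2]=\gamma e_2-\beta e_3$, $[e_1,e_3]=-\beta e_2-\gamma e_3$, $[e_2,e_3]=\alpha e_1$, equipped with the left-invariant Lorentzian metric $g$ for which $\{e_1,e_2,e_3\}$ is pseudo-orthonormal with $e_3$ timelike, and with the product structure $J$. Let $\lambda_0,c\in\mathbb{R}$. Then there exists a derivation $D$ of $\mathfrak{g}_2$ with $\widetilde{\mathrm{Ric}}^0=(s^0\lambda_0+c)\mathrm{Id}+D$ (i.e. $(G_2,g,J)$ is an algebraic Schouten soliton associated to the canonical connection $\nabla^0$) if and only if $\alpha=\beta=0$ and $c=-\gamma^2+2\gamma^2\lambda_0$.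
   Context: Pseudo-orthonormal means $g(e_1,e_1)=g(e_2,e_2)=1$, $g(e_3,e_3)=-1$, $g(e_i,e_j)=0$ for $i\neq j$; left-invariant tensors are identified with their values on $\mathfrak{g}$. $\nabla$ is the Levi-Civita connection of $g$. The product structure $J$ is the left-invariant endomorphism with $Je_1=e_1$, $Je_2=e_2$, $Je_3=-e_3$. The canonical connection is $\nabla^0_XY=\nabla_XY-\frac12(\nabla_XJ)JY$, and the Kobayashi–Nomizu connection is $\nabla^1_XY=\nabla^0_XY-\frac14[(\nabla_YJ)JX-(\nabla_{JY}J)X]$. For $k=0,1$: $R^k(X,Y)Z=\nabla^k_X\nabla^k_YZ-\nabla^k_Y\nabla^k_XZ-\nabla^k_{[X,Y]}Z$; $\rho^k(X,Y)=-g(R^k(X,e_1)Y,e_1)-g(R^k(X,e_2)Y,e_2)+g(R^k(X,e_3)Y,e_3)$; $\widetilde\rho^k(X,Y)=\frac12(\rho^k(X,Y)+\rho^k(Y,X))$; $\widetilde{\mathrm{Ric}}^k$ is defined by $\widetilde\rho^k(X,Y)=g(\widetilde{\mathrm{Ric}}^k(X),Y)$; and $s^k=\widetilde\rho^k(e_1,e_1)+\widetilde\rho^k(e_2,e_2)-\widetilde\rho^k(e_3,e_3)$. A derivation of $\mathfrak{g}$ is a linear map $D$ with $D[X,Y]=[DX,Y]+[X,DY]$. $(G,g,J)$ is an algebraic Schouten soliton associated to $\nabla^k$ (with real constants $\lambda_0,c$) if $\widetilde{\mathrm{Ric}}^k=(s^k\lambda_0+c)\mathrm{Id}+D$ for some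 derivation $D$. *)

(* Left-invariant tensors on the simply connected Lie group
   are identified with their values on the Lie algebra g = R^3 (row vectors),
   with basis e_1,e_2,e_3 = delta_mx 0 i for i = 0,1,2. *)
From HB Require Import structures.
From mathcomp Require Import all_boot all_order all_algebra.
Set Implicit Arguments. Unset Strict Implicit. Unset Printing Implicit Defensive.
Import Order.TTheory GRing.Theory Num.Theory.
Local Open Scope ring_scope.

Section Defs.
Variable R : realFieldType.

Definition vec := 'rV[R]_3.

Definition i1 : 'I_3 := @Ordinal 3 0 isT.
Definition i2 : 'I_3 := @Ordinal 3 1 isT.
Definition i3 : 'I_3 := @Ordinal 3 2 isT.

Definition ev (i : 'I_3) : vec := delta_mx 0 i.

Definition mk3 (a b c : R) : vec := \row_k [:: a; b; c]`_k.

Definition eta (i : 'I_3) : R := if i == i3 then -1 else 1.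

Definition gm (X Y : vec) : R := \sum_i eta i * X 0 i * Y 0 i.

Definition Jm (X : vec) : vec := \row_i (eta i * X 0 i).

(* Lie bracket of g_2:
   [e1,e2] = gamma e2 - beta e3, [e1,e3] = - beta e2 - gamma e3,
   [e2,e3] = alpha e1, extended bilinearly and skew-symmetrically. *)
Definition br2 (alpha beta gamma : R) (X Y : vec) : vec :=
  let x1 := X 0 i1 in let x2 := X 0 i2 in let x3 := X 0 i3 in
  let y1 := Y 0 i1 in let y2 := Y 0 i2 in let y3 := Y 0 i3 in
  (x1 * y2 - x2 * y1) *: mk3 0 gamma (- beta)
  + (x1 * y3 - x3 * y1) *: mk3 0 (- beta) (- gamma)
  + (x2 * y3 - x3 * y2) *: mk3 alpha 0 0.

Variable br : vec -> vec -> vec.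

(* Levi-Civita connection of the left-invariant metric (Koszul formula):
   2 g(nabla_X Y, Z) = g([X,Y],Z) - g([Y,Z],X) + g([Z,X],Y). *)
Definition LC (X Y : vec) : vec :=
  \sum_k (eta k * ((gm (br X Y) (ev k) - gm (br Y (ev k)) X
                    + gm (br (ev k) X) Y) / 2)) *: ev k.

Definition nablaJ (X Y : vec) : vec := LC X (Jm Y) - Jm (LC X Y).

Definition nabla0 (X Y : vec) : vec := LC X Y - (1 / 2) *: nablaJ X (Jm Y).

Definition nabla1 (X Y : vec) : vec :=
  nabla0 X Y - (1 / 4) *: (nablaJ Y (Jm X) - nablaJ (Jm Y) X).

Variable nab : vec -> vec -> vec.

Definition Curv (X Y Z : vec) : vec :=
  nab X (nab Y Z) - nab Y (nab X Z) - nab (br X Y) Z.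

Definition rho (X Y : vec) : R :=
  \sum_k (- eta k) * gm (Curv X (ev k) Y) (ev k).

Definition rhot (X Y : vec) : R := (rho X Y + rho Y X) / 2.

(* g(Ric X, Y) = rhot X Y *)
Definition Ric (X : vec) : vec := \sum_k (eta k * rhot X (ev k)) *: ev k.

Definition scal : R := \sum_k eta k * rhot (ev k) (ev k).

End Defs.

(* A derivation of (R^3, br), as a linear map X |-> X *m D on row vectors *)
Definition is_derivation (R : realFieldType) (br : vec R -> vec R -> vec R)
  (D : 'M[R]_3) : Prop :=
  forall X Y : vec R, br X Y *m D = br (X *m D) Y + br X (Y *m D).

(* In the pseudo-orthonormal basis the Ricci operator of the canonical connection has
   the matrix [ricmx r t] with r = -gamma^2 - alpha beta / 2 and
   t = gamma (beta / 2 - alpha / 4), and s^0 = 2 r.  Since the Ricci operator is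
   linear, the only candidate is D = Ric^0 - K Id with K = s^0 lambda0 + c.  The
   failure of D to be a derivation is bilinear and skew-symmetric, so it suffices to
   test the three brackets of basis vectors; this yields four polynomial equations
   in alpha, beta, gamma, K which, for gamma <> 0, force alpha = beta = 0 and
   K = -gamma^2. *)
From Pilot Require Import Defs.
From HB Require Import structures.
From mathcomp Require Import all_boot all_order all_algebra ring lra.
Import Order.TTheory GRing.Theory Num.Theory.
Local Open Scope ring_scope.

Section Coordinates.
Context {R : realFieldType}.
Implicit Types (x y z : R) (X Y : vec R).

Lemma mk3E1 x y z : mk3 x y z 0 i1 = x. Proof. by rewrite mxE. Qed.
Lemma mk3E2 x y z : mk3 x y z 0 i2 = y. Proof. by rewrite mxE. Qed.
Lemma mk3E3 x y z : mk3 x y z 0 i3 = z. Proof. by rewrite mxE. Qed.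

Lemma ord3P (P : 'I_3 -> Prop) : P i1 -> P i2 -> P i3 -> forall i, P i.
Proof.
move=> P1 P2 P3 [[|[|[|n]]] lt_n3] //.
- by rewrite (_ : Ordinal _ = i1) //; apply/val_inj.
- by rewrite (_ : Ordinal _ = i2) //; apply/val_inj.
- by rewrite (_ : Ordinal _ = i3) //; apply/val_inj.
Qed.

Lemma sum3 (V : nmodType) (F : 'I_3 -> V) : \sum_k F k = F i1 + F i2 + F i3.
Proof.
rewrite !big_ord_recr big_ord0 /= add0r.
by congr (F _ + F _ + F _); apply/val_inj.
Qed.

Lemma vec_mk3 X : X = mk3 (X 0 i1) (X 0 i2) (X 0 i3).
Proof. by apply/rowP; apply: ord3P; rewrite ?mk3E1 ?mk3E2 ?mk3E3. Qed.

Lemma mk3_inj (x y z x' y' z' : R) :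
  mk3 x y z = mk3 x' y' z' -> [/\ x = x', y = y' & z = z'].
Proof.
move=> e; have coord k : mk3 x y z 0 k = mk3 x' y' z' 0 k by rewrite e.
by split; [move: (coord i1) | move: (coord i2) | move: (coord i3)];
  rewrite ?mk3E1 ?mk3E2 ?mk3E3.
Qed.

Lemma mk3D (x y z x' y' z' : R) :
  mk3 x y z + mk3 x' y' z' = mk3 (x + x') (y + y') (z + z').
Proof. by apply/rowP; apply: ord3P; rewrite !mxE. Qed.

Lemma mk3N x y z : - mk3 x y z = mk3 (- x) (- y) (- z).
Proof. by apply/rowP; apply: ord3P; rewrite !mxE. Qed.

Lemma mk3Z a x y z : a *: mk3 x y z = mk3 (a * x) (a * y) (a * z).
Proof. by apply/rowP; apply: ord3P; rewrite !mxE. Qed.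

Lemma mk30 : mk3 0 0 0 = 0 :> vec R.
Proof. by apply/rowP; apply: ord3P; rewrite !mxE. Qed.

Lemma mk3_eq0 x y z : mk3 x y z = 0 <-> [/\ x = 0, y = 0 & z = 0].
Proof. by rewrite -mk30; split=> [/mk3_inj | [-> -> ->]]. Qed.

Lemma ev1 : ev R i1 = mk3 1 0 0. Proof. by apply/rowP; apply: ord3P; rewrite !mxE. Qed.
Lemma ev2 : ev R i2 = mk3 0 1 0. Proof. by apply/rowP; apply: ord3P; rewrite !mxE. Qed.
Lemma ev3 : ev R i3 = mk3 0 0 1. Proof. by apply/rowP; apply: ord3P; rewrite !mxE. Qed.

Lemma eta1 : Defs.eta R i1 = 1. Proof. by []. Qed.
Lemma eta2 : Defs.eta R i2 = 1. Proof. by []. Qed.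
Lemma eta3 : Defs.eta R i3 = -1. Proof. by []. Qed.

Lemma gm_mk3 (x y z x' y' z' : R) :
  gm (mk3 x y z) (mk3 x' y' z') = x * x' + y * y' - z * z'.
Proof. by rewrite /gm sum3 !mk3E1 !mk3E2 !mk3E3 eta1 eta2 eta3; ring. Qed.

Lemma Jm_mk3 x y z : Jm (mk3 x y z) = mk3 x y (- z).
Proof. by apply/rowP; apply: ord3P; rewrite !mxE ?eta1 ?eta2 ?eta3 ?mul1r ?mulN1r. Qed.

Lemma mulmx_mk3 x y z (D : 'M[R]_3) :
  mk3 x y z *m D = mk3 (x * D i1 i1 + y * D i2 i1 + z * D i3 i1)
                       (x * D i1 i2 + y * D i2 i2 + z * D i3 i2)
                       (x * D i1 i3 + y * D i2 i3 + z * D i3 i3).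
Proof. by apply/rowP; apply: ord3P; rewrite !mxE sum3 !mk3E1 !mk3E2 !mk3E3. Qed.

Lemma br2_mk3 (a b g x1 x2 x3 y1 y2 y3 : R) :
  br2 a b g (mk3 x1 x2 x3) (mk3 y1 y2 y3) =
  mk3 (a * (x2 * y3 - x3 * y2))
      (g * (x1 * y2 - x2 * y1) - b * (x1 * y3 - x3 * y1))
      (- b * (x1 * y2 - x2 * y1) - g * (x1 * y3 - x3 * y1)).
Proof. by rewrite /br2 !mk3E1 !mk3E2 !mk3E3 !mk3Z !mk3D; congr mk3; ring. Qed.

End Coordinates.

Definition ricmx {R : realFieldType} (r t : R) : 'M[R]_3 :=
  \matrix_(i < 3) [:: mk3 r 0 0; mk3 0 r (- t); mk3 0 t 0]`_i.

Section CanonicalConnection.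
Context {R : realFieldType}.
Variables a b g : R.
Local Notation br := (br2 a b g).
Local Notation nab := (nabla0 br).

Lemma nabla0_mk3 (x1 x2 x3 y1 y2 y3 : R) :
  nab (mk3 x1 x2 x3) (mk3 y1 y2 y3) =
  mk3 ((g * x2 - a / 2 * x3) * y2) (- (g * x2 - a / 2 * x3) * y1) 0.
Proof.
rewrite /nabla0 /nablaJ /LC.
rewrite !(sum3, ev1, ev2, ev3, eta1, eta2, eta3).
rewrite !(br2_mk3, gm_mk3, Jm_mk3, mk3Z, mk3D, mk3N).
by congr mk3; field; rewrite ?pnatr_eq0.
Qed.

Lemma Curv0_mk3 (x1 x2 x3 y1 y2 y3 z1 z2 z3 : R) :
  let q := (g ^+ 2 + a * b / 2) * (x1 * y2 - x2 * y1)
           + (a * g / 2 - g * b) * (x1 * y3 - x3 * y1) in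
  Curv br nab (mk3 x1 x2 x3) (mk3 y1 y2 y3) (mk3 z1 z2 z3) = mk3 (- q * z2) (q * z1) 0.
Proof.
rewrite /Curv !nabla0_mk3 br2_mk3 nabla0_mk3 !mk3N !mk3D.
by congr mk3; field; rewrite ?pnatr_eq0.
Qed.

Lemma rho0_mk3 (x1 x2 x3 y1 y2 y3 : R) :
  rho br nab (mk3 x1 x2 x3) (mk3 y1 y2 y3) =
  - (g ^+ 2 + a * b / 2) * (x1 * y1 + x2 * y2) - (a * g / 2 - g * b) * x3 * y2.
Proof. by rewrite /rho sum3 ev1 ev2 ev3 !Curv0_mk3 !gm_mk3 eta1 eta2 eta3; ring. Qed.

Lemma Ric0_mulmx (X : vec R) :
  Ric br nab X = X *m ricmx (- g ^+ 2 - a * b / 2) (g * (b / 2 - a / 4)).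
Proof.
rewrite [X in LHS]vec_mk3 [X in RHS]vec_mk3 mulmx_mk3 /Ric /rhot.
rewrite sum3 ev1 ev2 ev3 !rho0_mk3 eta1 eta2 eta3 !mk3Z !mk3D !mxE /=.
by congr mk3; field; rewrite ?pnatr_eq0.
Qed.

Lemma scal0E : scal br nab = 2 * (- g ^+ 2 - a * b / 2).
Proof.
rewrite /scal /rhot sum3 ev1 ev2 ev3 !rho0_mk3 eta1 eta2 eta3.
by field; rewrite ?pnatr_eq0.
Qed.

End CanonicalConnection.

Lemma soliton_derivationE {R : realFieldType} {br : vec R -> vec R -> vec R}
    {F : vec R -> vec R} {M : 'M[R]_3} (k : R) :
  (forall X, F X = X *m M) ->
  (exists D, is_derivation br D /\ forall X, F X = k *: X + X *m D) <->
  is_derivation br (M - k%:M).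
Proof.
move=> FM; split=> [[D [derD FD]] | derMk].
  suff -> : M - k%:M = D by [].
  apply/row_matrixP => i; rewrite !rowE mulmxBr mul_mx_scalar -FM FD.
  by rewrite addrC addKr.
exists (M - k%:M); split=> // X.
by rewrite mulmxBr mul_mx_scalar -FM addrC subrK.
Qed.

Definition derivation_defect {R : realFieldType} (br : vec R -> vec R -> vec R)
    (D : 'M[R]_3) (X Y : vec R) : vec R :=
  br X Y *m D - br (X *m D) Y - br X (Y *m D).

Lemma derivation_defect_eq0 {R : realFieldType} (br : vec R -> vec R -> vec R)
    (D : 'M[R]_3) (X Y : vec R) :
  derivation_defect br D X Y = 0 <-> br X Y *m D = br (X *m D) Y + br X (Y *m D).
Proof.
rewrite /derivation_defect -addrA -opprD.
by split=> [/eqP | ->]; [rewrite subr_eq0 => /eqP | rewrite subrr].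
Qed.

Section DerivationsOfG2.
Context {R : realFieldType}.
Variables a b g : R.
Local Notation br := (br2 a b g).
Local Notation delta D := (derivation_defect br D).

Lemma derivation_defect_br2_mk3 (D : 'M[R]_3) (x1 x2 x3 y1 y2 y3 : R) :
  delta D (mk3 x1 x2 x3) (mk3 y1 y2 y3) =
  (x1 * y2 - x2 * y1) *: delta D (ev R i1) (ev R i2)
  + (x1 * y3 - x3 * y1) *: delta D (ev R i1) (ev R i3)
  + (x2 * y3 - x3 * y2) *: delta D (ev R i2) (ev R i3).
Proof.
rewrite /derivation_defect ev1 ev2 ev3.
rewrite !(mulmx_mk3, br2_mk3, mk3Z, mk3D, mk3N).
by congr mk3; ring.
Qed.

Lemma is_derivation_br2P (D : 'M[R]_3) :
  is_derivation br D <->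
  [/\ delta D (ev R i1) (ev R i2) = 0, delta D (ev R i1) (ev R i3) = 0
    & delta D (ev R i2) (ev R i3) = 0].
Proof.
split=> [derD | [d12 d13 d23] X Y]; first by split; apply/derivation_defect_eq0.
apply/derivation_defect_eq0; rewrite (vec_mk3 X) (vec_mk3 Y) derivation_defect_br2_mk3.
by rewrite d12 d13 d23 !scaler0 !addr0.
Qed.

Lemma derivation_defect_ricmx (r t K : R) :
  let D := ricmx r t - K%:M in
  [/\ delta D (ev R i1) (ev R i2)
        = mk3 0 (- (g * (r - K) + 2 * b * t)) (b * (2 * r - K) - 2 * g * t),
      delta D (ev R i1) (ev R i3)
        = mk3 0 (- (2 * g * t + b * K)) (g * (r - K) + 2 * b * t)
    & delta D (ev R i2) (ev R i3) = mk3 (a * K) 0 0].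
Proof.
rewrite /derivation_defect ev1 ev2 ev3 !(mulmx_mk3, br2_mk3, mk3Z, mk3D, mk3N) !mxE /=.
by split; congr mk3; ring.
Qed.

Lemma is_derivation_ricmx_shift (r t K : R) :
  is_derivation br (ricmx r t - K%:M) <->
  [/\ g * (r - K) + 2 * b * t = 0, b * (2 * r - K) = 2 * g * t,
      2 * g * t + b * K = 0 & a * K = 0].
Proof.
rewrite is_derivation_br2P; have [-> -> ->] := derivation_defect_ricmx r t K.
split=> [[/mk3_eq0[_ ? ?] /mk3_eq0[_ ? _] /mk3_eq0[? _ _]] | [? ? ? ?]].
  by split; lra.
by split; apply/mk3_eq0; split; lra.
Qed.

End DerivationsOfG2.

Lemma g2_soliton_system {R : realFieldType} (a b g r t K : R) :
  g != 0 -> r = - g ^+ 2 - a * b / 2 -> t = g * (b / 2 - a / 4) ->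
  [/\ g * (r - K) + 2 * b * t = 0, b * (2 * r - K) = 2 * g * t,
      2 * g * t + b * K = 0 & a * K = 0]
  <-> [/\ a = 0, b = 0 & K = - g ^+ 2].
Proof.
move=> g0 -> ->; split=> [[E1 E2 E3 E4] | [-> -> ->]]; last by split; ring.
have g2_gt0 : 0 < g ^+ 2 by rewrite exprn_even_gt0.
have g2_neq0 : g ^+ 2 != 0 by rewrite gt_eqF.
have b0 : b = 0.
  have [// | b_neq0] := eqVneq b 0; exfalso.
  have r0 : - g ^+ 2 - a * b / 2 = 0.
    have /eqP : b * (- g ^+ 2 - a * b / 2) = 0 by lra.
    by rewrite mulf_eq0 (negbTE b_neq0) => /eqP.
  have : g ^+ 2 * (a * (2 * b - a))
         = 2 * a * (2 * g * (g * (b / 2 - a / 4)) + b * K) - 2 * b * (a * K) by field.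
  rewrite E3 E4 !mulr0 subrr.
  by move/eqP; rewrite mulf_eq0 (negbTE g2_neq0) /= => /eqP; nra.
have K_eq : K = - g ^+ 2.
  have /eqP : g * (- g ^+ 2 - K) = 0 by rewrite -E1 b0; field.
  by rewrite mulf_eq0 (negbTE g0) subr_eq0 => /eqP <-.
split=> //; apply/eqP; move: E4; rewrite K_eq => /eqP.
by rewrite mulf_eq0 oppr_eq0 (negbTE g2_neq0) orbF.
Qed.

Theorem theorem4p4 (R : realFieldType) (alpha beta gamma lambda0 c : R) :
  gamma != 0 ->
  ((exists D : 'M[R]_3,
      is_derivation (br2 alpha beta gamma) D /\
      forall X : vec R,
        Ric (br2 alpha beta gamma) (nabla0 (br2 alpha beta gamma)) X =
        (scal (br2 alpha beta gamma) (nabla0 (br2 alpha beta gamma)) * lambda0 + c) *: X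
        + X *m D)
   <->
   (alpha = 0 /\ beta = 0 /\ c = - gamma ^+ 2 + 2 * gamma ^+ 2 * lambda0)).
Proof.
move=> gamma_neq0.
rewrite scal0E (soliton_derivationE _ (Ric0_mulmx alpha beta gamma)).
rewrite is_derivation_ricmx_shift g2_soliton_system //.
by split=> [[-> -> cE] | [-> [-> cE]]]; do ?split=> //; lra.
Qed.
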